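(* Let $M$ be a finite set, let $\mathcal{X}\subseteq\mathcal{P}(M)$ be a closure system on $M$, and let $\mathcal{M}=\{N_i\mid i\in I\}\subseteq\mathcal{P}(M)$ be a consortial domain on $M$. If $\mathcal{M}$ is closed under (pairwise) intersection, then the set $\bigcup_{N\in\mathcal{M}}\mathcal{X}_N$ is closed under (pairwise) intersection.
   Context: A closure system on $M$ is a family of subsets of $M$ containing $M$ and closed under intersections. A consortial domain on $M$ is a family $\mathcal{M}=\{N_i\mid i\in I\}\subseteq\mathcal{P}(M)$ with $\bigcup_{i\in I}N_i=M$. For $N\subseteq M$, $\mathcal{X}_N:=\{X\cap N\mid X\in\mathcal{X}\}$. *)

From mathcomp Require Import all_boot.
Set Implicit Arguments. Unset Strict Implicit. Unset Printing Implicit Defensive.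

(* A closure system on M: a family of subsets of M containing M and closed
   under intersections of arbitrary subfamilies (the empty intersection
   being M). *)
Definition closure_system (T : finType) (M : {set T}) (X : {set {set T}}) :=
  [/\ X \subset powerset M, M \in X &
      forall F : {set {set T}}, F \subset X ->
        M :&: \bigcap_(Y in F) Y \in X].

Definition consortial_domain (T : finType) (M : {set T}) (MM : {set {set T}}) :=
  MM \subset powerset M /\ \bigcup_(N in MM) N = M.

Definition restr (T : finType) (X : {set {set T}}) (N : {set T}) : {set {set T}} :=
  [set Y :&: N | Y in X].

Definition closed_under_pairwise_intersection (T : finType) (F : {set {set T}}) :=
  forall A B, A \in F -> B \in F -> A :&: B \in F.

From mathcomp Require Import all_boot.

(* Two restrictions [Y1 :&: N1] and [Y2 :&: N2] meet in [(Y1 :&: Y2) :&: (N1 :&: N2)],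
   a restriction of the member [Y1 :&: Y2] of the closure system to the member
   [N1 :&: N2] of the domain. *)

Lemma closure_system_closed_setI (T : finType) (M : {set T}) (X : {set {set T}}) :
  closure_system M X -> closed_under_pairwise_intersection X.
Proof.
move=> [XM _ Xcap] A B AX BX.
have sABM : A :&: B \subset M.
  by apply: subset_trans (subsetIl A B) _; move/subsetP: XM => /(_ A AX); rewrite inE.
have -> : A :&: B = M :&: \bigcap_(Y in [set A; B]) Y.
  by rewrite bigcap_setU !big_set1; apply/esym/setIidPr.
by apply: Xcap; apply/subsetP => Y; rewrite !inE => /orP [] /eqP ->.
Qed.

Lemma restr_setI (T : finType) (X : {set {set T}}) (N1 N2 A B : {set T}) :
  closed_under_pairwise_intersection X ->
  A \in restr X N1 -> B \in restr X N2 -> A :&: B \in restr X (N1 :&: N2).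
Proof.
move=> Xcap /imsetP [Y1 Y1X ->] /imsetP [Y2 Y2X ->].
by apply/imsetP; exists (Y1 :&: Y2); [exact: Xcap | rewrite setIACA].
Qed.

Lemma closed_bigcup_restr (T : finType) (X MM : {set {set T}}) :
  closed_under_pairwise_intersection X -> closed_under_pairwise_intersection MM ->
  closed_under_pairwise_intersection (\bigcup_(N in MM) restr X N).
Proof.
move=> Xcap MMcap A B /bigcupP [N1 N1MM AN1] /bigcupP [N2 N2MM BN2].
by apply/bigcupP; exists (N1 :&: N2); [exact: MMcap | exact: restr_setI].
Qed.

Theorem mainTheorem2 (T : finType) (M : {set T}) (X MM : {set {set T}}) :
  closure_system M X -> consortial_domain M MM ->
  closed_under_pairwise_intersection MM ->
  closed_under_pairwise_intersection (\bigcup_(N in MM) restr X N).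
Proof.
by move=> /closure_system_closed_setI Xcap _; exact: closed_bigcup_restr.
Qed.
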